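(* Let $r\ge 1$ and $K\ge1$ be integers, $\beta_1,\beta_2>0$ and $\theta_1,\theta_2>0$. Let $\zeta=(1,0,0)$, $\eta=(0,0,1)$, $v=(0,0,1)$, $v'=(0,1,0)$, and for $i=1,\dots,r$ let $k_i=2^{i-1}K\zeta\in\mathbb{Z}^3$ and $k_i'=k_i+\eta$. Define the vector fields on $\mathbb{R}^3$ \[ u_0(x)=r^{-\beta_1}\sum_{i=1}^r|k_i|^{\theta_1}v\cos(k_i\cdot x),\qquad b_0(x)=r^{-\beta_2}\sum_{i=1}^r|k_i'|^{\theta_2}v'\cos(k_i'\cdot x). \] Then \[ \|u_0\|_{\dot B^{-\theta_1}_{\infty,\infty}}\lesssim r^{-\beta_1},\qquad \|b_0\|_{\dot B^{-\theta_2}_{\infty,\infty}}\lesssim r^{-\beta_2}, \] with implicit constants independent of $r$ and $K$.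
   Context: For $s>0$, $\|f\|_{\dot B^{-s}_{\infty,\infty}}=\sup_{t>0}t^{\frac{s}{2\alpha}}\|e^{-t(-\Delta)^{\alpha}}f\|_{L^\infty}$ for a fixed $\alpha>0$ (different $\alpha$ give equivalent norms), where $e^{-t(-\Delta)^\alpha}$ is the fractional heat semigroup (Fourier multiplier $e^{-t|\xi|^{2\alpha}}$). *)

From HB Require Import structures.
From mathcomp Require Import all_boot all_order all_algebra.
From mathcomp Require Import all_classical all_reals all_analysis.
Set Implicit Arguments. Unset Strict Implicit. Unset Printing Implicit Defensive.
Import Order.TTheory GRing.Theory Num.Theory.
Local Open Scope ring_scope.
Local Open Scope classical_set_scope.

Section Defs.
Variable R : realType.

Definition vec3 := 'rV[R]_3.

Definition evec (j : nat) : vec3 := \row_(l < 3) ((val l == j)%:R).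

Definition dot3 (k x : vec3) : R := \sum_(i < 3) k 0 i * x 0 i.

Definition enorm3 (k : vec3) : R := Num.sqrt (\sum_(i < 3) k 0 i ^+ 2).

Definition trig_field (s : seq (vec3 * vec3)) (x : vec3) : vec3 :=
  \sum_(p <- s) (cos (dot3 p.2 x) *: p.1).

(* fractional heat semigroup e^{-t(-Delta)^alpha}: Fourier multiplier
   e^{-t|xi|^{2 alpha}}, acting on cos(k.x) by multiplication by
   e^{-t|k|^{2 alpha}} *)
Definition frac_heat (alpha t : R) (s : seq (vec3 * vec3)) :=
  [seq (expR (- (t * enorm3 p.2 `^ (2 * alpha))) *: p.1, p.2) | p <- s].

Definition Linf_norm (s : seq (vec3 * vec3)) : \bar R :=
  ereal_sup [set (enorm3 (trig_field s x))%:E | x in [set: vec3]].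

(* ||f||_{\dot B^{-s}_{oo,oo}} = sup_{t>0} t^{s/(2 alpha)} ||e^{-t(-Delta)^alpha} f||_oo *)
Definition besov_neg_norm (alpha s : R) (f : seq (vec3 * vec3)) : \bar R :=
  ereal_sup [set ((t `^ (s / (2 * alpha)))%:E * Linf_norm (frac_heat alpha t f))%E
            | t in [set t : R | 0 < t]].

Definition zeta : vec3 := evec 0.
Definition eta_ : vec3 := evec 2.
Definition vv : vec3 := evec 2.
Definition vv' : vec3 := evec 1.

Definition kfreq (K i : nat) : vec3 := (2 ^ i.-1 * K)%:R *: zeta.
Definition kfreq' (K i : nat) : vec3 := kfreq K i + eta_.

Definition u0 (r K : nat) (beta theta : R) : seq (vec3 * vec3) :=
  [seq (((r%:R) `^ (- beta) * enorm3 (kfreq K i) `^ theta) *: vv, kfreq K i)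
  | i <- iota 1 r].

Definition b0 (r K : nat) (beta theta : R) : seq (vec3 * vec3) :=
  [seq (((r%:R) `^ (- beta) * enorm3 (kfreq' K i) `^ theta) *: vv', kfreq' K i)
  | i <- iota 1 r].

End Defs.

From HB Require Import structures.
From mathcomp Require Import all_boot all_order all_algebra.
From mathcomp Require Import all_classical all_reals all_analysis.
From mathcomp Require Import ring lra.
Import Order.TTheory GRing.Theory Num.Theory.
Set Implicit Arguments. Unset Strict Implicit. Unset Printing Implicit Defensive.
Local Open Scope ring_scope.

(* Both fields point in a fixed coordinate direction, so the heat semigroup
   only damps the amplitudes and
     t^c ||e^{-t(-Delta)^alpha} f||_oo <= r^{-beta} sum_i s_i^c e^{-s_i},
   with c = theta / (2 alpha) and s_i = t |k_i|^{2 alpha}.  Since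
   s^c e^{-s} <= M min(s^c, s^{-c}) and the s_i^c grow geometrically (the
   |k_i|^2 at least double), the sum is bounded by a geometric series on
   each side of 1, uniformly in t, r and K. *)

Section LacunarySums.
Variable R : realType.

Definition lacunary (m : nat -> R) :=
  forall i, (1 <= i)%N -> 0 < m i /\ 2 * m i ^+ 2 <= m i.+1 ^+ 2.

Definition tent (x : R) : R := if x <= 1 then x else x^-1.

(* A bounded nondecreasing function whose increments dominate [tent]: this
   lets a lacunary sum of [tent] telescope. *)
Definition tent_potential (x : R) : R := if x <= 1 then x else 2 - x^-1.

Lemma tent_potential_le (x y : R) :
  0 < x -> x <= y -> tent_potential x <= tent_potential y.
Proof.
move=> x0 xy; have y0 : 0 < y by apply: lt_le_trans xy.
rewrite /tent_potential; case: ifP => hx; case: ifP => hy //.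
- have : y^-1 < 1 by rewrite invf_lt1 // ltNge hy.
  lra.
- have x1 : 1 < x by rewrite ltNge hx.
  have := lt_le_trans x1 xy; lra.
- by rewrite lerD2l lerN2 lef_pV2 ?posrE.
Qed.

Lemma tent_potential_ge0 (x : R) : 0 < x -> 0 <= tent_potential x.
Proof.
move=> x0; rewrite /tent_potential; case: ifP => hx; first exact: ltW.
have : x^-1 < 1 by rewrite invf_lt1 // ltNge hx.
lra.
Qed.

Lemma tent_potential_le2 (x : R) : 0 < x -> tent_potential x <= 2.
Proof.
move=> x0; rewrite /tent_potential; case: ifP => hx; first lra.
by rewrite gerBl invr_ge0 ltW.
Qed.

Lemma tent_le_potential_increment (rho x y : R) : 1 < rho -> 0 < x -> rho * x <= y ->
  tent x <= rho / (rho - 1) * (tent_potential y - tent_potential x).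
Proof.
move=> r1 x0 xy.
have r0 : 0 < rho by lra.
have rx0 : 0 < rho * x by exact: mulr_gt0.
apply: (@le_trans _ _ (rho / (rho - 1) * (tent_potential (rho * x) - tent_potential x))).
  rewrite /tent_potential /tent.
  case: (lerP (rho * x) 1) => hrx.
    have -> : x <= 1 by nra.
    have -> : rho / (rho - 1) * (rho * x - x) = rho * x.
      by field; rewrite subr_eq0 gt_eqF.
    by rewrite ler_peMl // ltW.
  case: (lerP x 1) => hx.
    have -> : 2 - (rho * x)^-1 - x
        = (rho - 1) / rho + (rho * x - 1) * (1 - x) / (rho * x).
      by field; rewrite ?gt_eqF.
    rewrite mulrDr.
    have -> : rho / (rho - 1) * ((rho - 1) / rho) = 1 by field; rewrite ?gt_eqF //; lra.
    suff : 0 <= rho / (rho - 1) * ((rho * x - 1) * (1 - x) / (rho * x)) by lra.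
    by rewrite mulr_ge0 ?divr_ge0 ?mulr_ge0 //; lra.
  have -> : rho / (rho - 1) * (2 - (rho * x)^-1 - (2 - x^-1)) = x^-1.
    by field; rewrite ?gt_eqF //; lra.
  by [].
apply: ler_wpM2l; first by rewrite divr_ge0 //; lra.
by rewrite lerD2r tent_potential_le.
Qed.

Lemma sum_tent_lacunary_le (rho : R) (x : nat -> R) (a n : nat) : 1 < rho ->
  (forall i, (a <= i)%N -> 0 < x i /\ rho * x i <= x i.+1) ->
  \sum_(i <- iota a n) tent (x i) <= 2 * (rho / (rho - 1)).
Proof.
move=> r1 Hx.
have telescope : forall b m, (a <= b)%N -> \sum_(i <- iota b m) tent (x i)
    <= rho / (rho - 1) * (tent_potential (x (b + m)%N) - tent_potential (x b)).
  move=> b m; elim: m b => [|m IH] b hb; first by rewrite big_nil addn0 subrr mulr0.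
  have [x0 xs] := Hx b hb.
  rewrite /= big_cons -addSnnS.
  have -> : tent_potential (x (b.+1 + m)%N) - tent_potential (x b) =
      (tent_potential (x b.+1) - tent_potential (x b))
      + (tent_potential (x (b.+1 + m)%N) - tent_potential (x b.+1)) by ring.
  by rewrite mulrDr lerD // ?tent_le_potential_increment // IH // ltnW.
have rho0 : 0 <= rho / (rho - 1) by rewrite divr_ge0 //; lra.
apply: le_trans (telescope a n (leqnn a)) _.
rewrite mulrC ler_wpM2r //.
have := tent_potential_le2 (Hx _ (leq_addr n a)).1.
have := tent_potential_ge0 (Hx _ (leqnn a)).1.
lra.
Qed.

Lemma powR_le_expR (a s : R) : 0 <= a -> 0 < s ->
  s `^ a <= 1 + (Num.truncn a).+1`!%:R * expR s.
Proof.
move=> a0 s0; set N := Num.truncn a.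
have f0 : 0 <= (N.+1)`!%:R :> R by rewrite ler0n.
case: (lerP s 1) => hs.
  apply: (@le_trans _ _ 1); last by rewrite lerDl mulr_ge0 ?expR_ge0.
  by rewrite -(powRr0 s) ger_powR // s0 hs.
apply: (@le_trans _ _ (s ^+ N.+1)).
  rewrite -powR_mulrn ?ler_powR ?(ltW s0) ?(ltW hs) //.
  exact: ltW (truncnS_gt a).
have : s ^+ N.+1 / (N.+1)`!%:R <= expR s.
  by apply: le_trans (expR_ge1Dxn N (ltW s0)); rewrite lerDr.
rewrite ler_pdivrMr ?ltr0n ?fact_gt0 // => h.
by apply: le_trans h _; rewrite mulrC lerDr.
Qed.

Lemma powR_expR_le_tent (c : R) : 0 < c ->
  exists M : R, 0 < M /\ forall s, 0 < s -> s `^ c * expR (- s) <= M * tent (s `^ c).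
Proof.
move=> c0; set F := (Num.truncn (c + c)).+1`!%:R : R.
have F0 : 0 <= F by rewrite ler0n.
exists (1 + F); split; first lra.
move=> s s0.
have sc0 : 0 < s `^ c by apply: powR_gt0.
have e1 : expR (- s) <= 1 by rewrite -expR0 ler_expR; lra.
rewrite /tent; case: ifP => hsc.
  by rewrite mulrC ler_pM2r // (le_trans e1) // lerDl.
rewrite ler_pdivlMr // mulrAC -powRD ?(gt_eqF s0) ?implybT // mulrC.
have es : expR (- s) * expR s = 1 by rewrite -expRD addNr expR0.
apply: (@le_trans _ _ (expR (- s) * (1 + F * expR s))).
  by rewrite ler_wpM2l ?expR_ge0 ?powR_le_expR //; lra.
by rewrite mulrDr mulr1 mulrCA es mulr1 lerD2r.
Qed.

Lemma lacunary_scaled_powR (alpha c t m m' : R) :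
  0 < alpha -> 0 <= c -> 0 < t -> 0 < m -> 0 < m' -> 2 * m ^+ 2 <= m' ^+ 2 ->
  2 `^ (alpha * c) * (t * m `^ (2 * alpha)) `^ c <= (t * m' `^ (2 * alpha)) `^ c.
Proof.
move=> a0 c0 t0 m0 m'0 mm'.
have sqr_powR y : 0 <= y -> y `^ (2 * alpha) = (y ^+ 2) `^ alpha.
  by move=> y0; rewrite powRrM (powR_mulrn 2 y0).
have step : 2 `^ alpha * (t * m `^ (2 * alpha)) <= t * m' `^ (2 * alpha).
  rewrite mulrCA ler_pM2l // !sqr_powR ?(ltW m0) ?(ltW m'0) // -powRM ?sqr_ge0 //.
  by apply: ge0_ler_powR; rewrite ?nnegrE ?mulr_ge0 ?sqr_ge0 // ltW.
have s0 : 0 <= t * m `^ (2 * alpha) by rewrite mulr_ge0 ?powR_ge0 ?(ltW t0).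
rewrite powRrM -powRM ?powR_ge0 //.
by apply: ge0_ler_powR; rewrite ?nnegrE ?mulr_ge0 ?powR_ge0 ?(ltW t0).
Qed.

Lemma lacunary_heat_sum_bounded (alpha theta : R) : 0 < alpha -> 0 < theta ->
  exists C : R, 0 < C /\ forall (m : nat -> R) (t : R) (r : nat), 0 < t -> lacunary m ->
    t `^ (theta / (2 * alpha)) *
      \sum_(i <- iota 1 r) expR (- (t * m i `^ (2 * alpha))) * m i `^ theta <= C.
Proof.
move=> a0 th0; set c := theta / (2 * alpha).
have c0 : 0 < c by rewrite divr_gt0 // mulr_gt0.
have [M [M0 HM]] := powR_expR_le_tent c0.
set rho := 2 `^ (alpha * c).
have r1 : 1 < rho.
  have := @gt0_ltr_powR R (alpha * c) (mulr_gt0 a0 c0) 1 2.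
  by rewrite powR1 => ->; rewrite ?nnegrE //; lra.
have rho0 : 0 < rho / (rho - 1) by rewrite divr_gt0 ?subr_gt0 ?(lt_trans ltr01).
exists (M * (2 * (rho / (rho - 1)))); split; first by rewrite mulr_gt0 // mulr_gt0.
move=> m t r t0 Hm.
set s := fun i => t * m i `^ (2 * alpha).
have s0 i : (1 <= i)%N -> 0 < s i by move=> hi; rewrite mulr_gt0 ?powR_gt0 ?(Hm i hi).1.
have -> : t `^ c * \sum_(i <- iota 1 r) expR (- s i) * m i `^ theta
    = \sum_(i <- iota 1 r) s i `^ c * expR (- s i).
  rewrite mulr_sumr; apply: eq_bigr => i _.
  rewrite powRM ?powR_ge0 ?(ltW t0) // -powRrM.
  have -> : 2 * alpha * c = theta by rewrite /c; field; rewrite gt_eqF.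
  ring.
apply: (@le_trans _ _ (\sum_(i <- iota 1 r) M * tent (s i `^ c))).
  rewrite big_seq [leRHS]big_seq; apply: ler_sum => i.
  by rewrite mem_iota => /andP[hi _]; apply: HM; apply: s0.
rewrite -mulr_sumr ler_wpM2l ?(ltW M0) //.
apply: (sum_tent_lacunary_le (x := fun i => s i `^ c)) => // i hi.
split; first by rewrite powR_gt0 ?s0.
have [mi0 mi2] := Hm i hi.
by apply: lacunary_scaled_powR; rewrite ?(ltW c0) ?(Hm i.+1 (leqW hi)).1.
Qed.

End LacunarySums.

Section SingleDirectionFields.
Variable R : realType.
Implicit Types (g : nat -> R) (k : nat -> vec3 R) (j : nat) (s : seq nat).

Lemma enorm3_scale_evec (a : R) j : (j < 3)%N -> enorm3 (a *: evec R j) = `|a|.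
Proof.
move=> hj; rewrite /enorm3 !big_ord_recr big_ord0 /= !mxE /= -sqrtr_sqr.
by congr Num.sqrt; case: j hj => [|[|[|]]] //= _; rewrite !(mulr1, mulr0) expr0n /=; ring.
Qed.

Lemma trig_field_evec g k j s x :
  trig_field [seq (g i *: evec R j, k i) | i <- s] x =
  (\sum_(i <- s) cos (dot3 (k i) x) * g i) *: evec R j.
Proof. by rewrite /trig_field big_map scaler_suml; apply: eq_bigr => i _; rewrite scalerA. Qed.

Lemma frac_heat_evec (alpha t : R) g k j s :
  frac_heat alpha t [seq (g i *: evec R j, k i) | i <- s] =
  [seq ((expR (- (t * enorm3 (k i) `^ (2 * alpha))) * g i) *: evec R j, k i) | i <- s].
Proof. by rewrite /frac_heat -map_comp; apply: eq_map => i /=; rewrite scalerA. Qed.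

Lemma Linf_norm_evec_le g k j s : (j < 3)%N ->
  (Linf_norm [seq (g i *: evec R j, k i) | i <- s] <= (\sum_(i <- s) `|g i|)%:E)%E.
Proof.
move=> hj; apply: ge_ereal_sup => _ [x _ <-]; rewrite lee_fin.
rewrite trig_field_evec enorm3_scale_evec //.
apply: le_trans (ler_norm_sum _ _ _) _; apply: ler_sum => i _.
by rewrite normrM ler_piMl // cos_max.
Qed.

Lemma besov_neg_norm_evec_le (alpha theta beta C : R) j k (r : nat) : (j < 3)%N ->
  (forall t, 0 < t -> t `^ (theta / (2 * alpha)) *
     \sum_(i <- iota 1 r) expR (- (t * enorm3 (k i) `^ (2 * alpha))) * enorm3 (k i) `^ theta
     <= C) ->
  (besov_neg_norm alpha theta
     [seq ((r%:R `^ (- beta) * enorm3 (k i) `^ theta) *: evec R j, k i) | i <- iota 1 r]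
   <= (C * r%:R `^ (- beta))%:E)%E.
Proof.
move=> hj HC; apply: ge_ereal_sup => _ [t t0 <-] /=.
rewrite frac_heat_evec.
apply: le_trans (lee_wpmul2l _ (Linf_norm_evec_le _ _ _ hj)) _.
  by rewrite lee_fin powR_ge0.
rewrite -EFinM lee_fin.
have -> : \sum_(i <- iota 1 r) `|expR (- (t * enorm3 (k i) `^ (2 * alpha))) *
             (r%:R `^ (- beta) * enorm3 (k i) `^ theta)|
    = r%:R `^ (- beta) * \sum_(i <- iota 1 r)
        expR (- (t * enorm3 (k i) `^ (2 * alpha))) * enorm3 (k i) `^ theta.
  rewrite mulr_sumr; apply: eq_bigr => i _.
  by rewrite ger0_norm ?mulr_ge0 ?powR_ge0 ?expR_ge0 //; ring.
by rewrite mulrCA (mulrC C) ler_wpM2l ?powR_ge0 ?HC.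
Qed.

Lemma enorm3_kfreq (K i : nat) : enorm3 (kfreq R K i) = (2 ^ i.-1 * K)%:R.
Proof. by rewrite enorm3_scale_evec // ger0_norm. Qed.

Lemma enorm3_kfreq' (K i : nat) :
  enorm3 (kfreq' R K i) = Num.sqrt ((2 ^ i.-1 * K)%:R ^+ 2 + 1).
Proof. by rewrite /enorm3 !big_ord_recr big_ord0 /= !mxE /=; congr Num.sqrt; ring. Qed.

Lemma kfreq_doubles (K i : nat) : (1 <= i)%N ->
  (2 ^ i.+1.-1 * K)%:R = 2 * (2 ^ i.-1 * K)%:R :> R.
Proof. by case: i => [|i] //= _; rewrite expnS -mulnA natrM. Qed.

Lemma lacunary_kfreq (K : nat) : (1 <= K)%N ->
  lacunary (fun i => enorm3 (kfreq R K i)).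
Proof.
move=> K1 i hi; rewrite !enorm3_kfreq (kfreq_doubles K hi).
have : 1 <= (2 ^ i.-1 * K)%:R :> R by rewrite ler1n muln_gt0 expn_gt0.
move: (2 ^ i.-1 * K)%:R => n n1; split; [lra | nra].
Qed.

Lemma lacunary_kfreq' (K : nat) : (1 <= K)%N ->
  lacunary (fun i => enorm3 (kfreq' R K i)).
Proof.
move=> K1 i hi; rewrite !enorm3_kfreq' (kfreq_doubles K hi).
have : 1 <= (2 ^ i.-1 * K)%:R :> R by rewrite ler1n muln_gt0 expn_gt0.
move: (2 ^ i.-1 * K)%:R => n n1.
rewrite !sqr_sqrtr ?addr_ge0 ?sqr_ge0 // sqrtr_gt0; split; nra.
Qed.

End SingleDirectionFields.

Theorem lemma4p2 (R : realType) (alpha beta1 beta2 theta1 theta2 : R) :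
  0 < alpha -> 0 < beta1 -> 0 < beta2 -> 0 < theta1 -> 0 < theta2 ->
  exists C : R, 0 < C /\
    forall r K : nat, (1 <= r)%N -> (1 <= K)%N ->
      (besov_neg_norm alpha theta1 (u0 r K beta1 theta1)
         <= (C * (r%:R) `^ (- beta1))%:E)%E /\
      (besov_neg_norm alpha theta2 (b0 r K beta2 theta2)
         <= (C * (r%:R) `^ (- beta2))%:E)%E.
Proof.
move=> a0 _ _ t10 t20.
have [C1 [C1p H1]] := lacunary_heat_sum_bounded a0 t10.
have [C2 [C2p H2]] := lacunary_heat_sum_bounded a0 t20.
exists (C1 + C2); split; first exact: addr_gt0.
move=> r K _ K1; split.
- apply: le_trans (@besov_neg_norm_evec_le R alpha theta1 beta1 C1 2 (kfreq R K) r _ _) _ => //.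
    by move=> t t0; apply: H1 => //; apply: lacunary_kfreq.
  by rewrite lee_fin ler_wpM2r ?powR_ge0 // lerDl ltW.
- apply: le_trans (@besov_neg_norm_evec_le R alpha theta2 beta2 C2 1 (kfreq' R K) r _ _) _ => //.
    by move=> t t0; apply: H2 => //; apply: lacunary_kfreq'.
  by rewrite lee_fin ler_wpM2r ?powR_ge0 // lerDr ltW.
Qed.
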